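(* Let $x_1,\dots,x_N$ be training data points, let $f(x,\theta)$ be a loss function differentiable in $\theta$, and fix $\theta_t$. Let $S_b\subseteq\{x_1,\dots,x_N\}$ be a random bucket, and conditionally on $S_b$ let $x_m$ be chosen uniformly at random from $S_b$. Let $p_i=\Pr(x_i\in S_b)>0$ and let $\mathbb{P}(x_i,x_j\in S_b)$ denote the probability that both $x_i$ and $x_j$ belong to $S_b$. For the estimator $$\mathrm{Est} = \frac{1}{N}\sum_{i=1}^N \mathbb{1}_{x_i\in S_b}\,\mathbb{1}_{(x_i = x_m \mid x_i\in S_b)}\,\frac{\nabla f(x_i,\theta_t)\cdot |S_b|}{p_i},$$ the trace of its covariance matrix $\Sigma(\mathrm{Est})$ equals $$\mathrm{Tr}(\Sigma(\mathrm{Est})) = \frac{1}{N^2}\sum_{i=1}^N \frac{\|\nabla f(x_i,\theta_t)\|_2^2\cdot \sum_{j=1}^N \frac{\mathbb{P}(x_i,x_j\in S_b)}{p_i}}{p_i} - \frac{1}{N^2}\Big\|\sum_{i=1}^N \nabla f(x_i,\theta_t)\Big\|_2^2.$$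
   Context: This is the LSH-sampled gradient estimator (LGD). Data points are preprocessed into locality-sensitive hash tables; at iteration $t$ the query (built from $\theta_t$) is hashed, a hash table is probed, and the matching non-empty bucket is $S_b$. The paper writes $p_i = cp(x_i,\theta_t)^K(1-cp(x_i,\theta_t)^K)^{l-1}$, with $cp$ the LSH collision probability, $K$ the number of concatenated hashes and $l$ the number of tables probed; in the statement $p_i$ denotes $\Pr(x_i\in S_b)$. $\mathbb{1}_{(x_i = x_m\mid x_i\in S_b)}$ is the indicator that $x_i$ is the element selected from the bucket. *)

From HB Require Import structures.
From mathcomp Require Import all_boot all_order all_algebra.
From mathcomp Require Import all_classical all_reals all_analysis.
Set Implicit Arguments. Unset Strict Implicit. Unset Printing Implicit Defensive.
Import Order.TTheory GRing.Theory Num.Theory.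
Import numFieldNormedType.Exports.
Local Open Scope ring_scope.

Definition grad (R : realType) (d : nat) (g : 'rV[R]_d -> R) (th : 'rV[R]_d)
  : 'rV[R]_d := \row_(k < d) derive g th (delta_mx 0 k).

Definition sqnorm (R : realType) (d : nat) (v : 'rV[R]_d) : R :=
  \sum_(k < d) v 0 k ^+ 2.

Definition pin (R : realType) (N : nat) (P : {set 'I_N} -> R) (i : 'I_N) : R :=
  \sum_(S : {set 'I_N} | i \in S) P S.

Definition pin2 (R : realType) (N : nat) (P : {set 'I_N} -> R) (i j : 'I_N) : R :=
  \sum_(S : {set 'I_N} | (i \in S) && (j \in S)) P S.

(* Joint law of (S_b, m): S_b ~ P, then m uniform on S_b. *)
Definition joint (R : realType) (N : nat) (P : {set 'I_N} -> R)
  (w : {set 'I_N} * 'I_N) : R :=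
  P w.1 * ((w.2 \in w.1)%:R / (#|w.1|)%:R).

Definition Est (R : realType) (N d : nat) (P : {set 'I_N} -> R)
  (g : 'I_N -> 'rV[R]_d) (w : {set 'I_N} * 'I_N) : 'rV[R]_d :=
  (N%:R)^-1 *: \sum_(i < N)
     (((i \in w.1)%:R * (i == w.2)%:R * (#|w.1|)%:R / pin P i) *: g i).

Definition Evec (R : realType) (N d : nat) (P : {set 'I_N} -> R)
  (Y : {set 'I_N} * 'I_N -> 'rV[R]_d) : 'rV[R]_d :=
  \sum_(w : {set 'I_N} * 'I_N) joint P w *: Y w.

Definition Cov (R : realType) (N d : nat) (P : {set 'I_N} -> R)
  (Y : {set 'I_N} * 'I_N -> 'rV[R]_d) : 'M[R]_d :=
  \sum_(w : {set 'I_N} * 'I_N)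
     joint P w *: ((Y w - Evec P Y)^T *m (Y w - Evec P Y)).

From HB Require Import structures.
From mathcomp Require Import all_boot all_order all_algebra.
From mathcomp Require Import all_classical all_reals all_analysis.
From mathcomp Require Import ring.
Set Implicit Arguments. Unset Strict Implicit. Unset Printing Implicit Defensive.
Import Order.TTheory GRing.Theory Num.Theory.
Import numFieldNormedType.Exports.
Local Open Scope ring_scope.

(* The trace of a covariance is E|Y|^2 - |E Y|^2.  The pair (S_b, x_m) has
   probability P(S_b) / |S_b|, so the factor |S_b| in the estimator cancels the
   uniform choice inside the bucket: E[1_{m in S} |S| h(S, m)] equals
   sum_m sum_{S containing m} P(S) h(S, m).  With h = g_m / (N p_m) this shows
   that Est is unbiased; with h = |S| |g_m|^2 / (N p_m)^2 and
   |S| = sum_j 1_{j in S} it gives the second moment through the pair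
   probabilities. *)

Lemma sum_sq_centered (R : comPzRingType) (I : finType) (mu y : I -> R) :
  \sum_i mu i = 1 ->
  \sum_i mu i * (y i - \sum_l mu l * y l) ^+ 2 =
  \sum_i mu i * y i ^+ 2 - (\sum_i mu i * y i) ^+ 2.
Proof.
move=> mu1; set e := \sum_l mu l * y l.
have expand i : mu i * (y i - e) ^+ 2 =
    mu i * y i ^+ 2 - (2 * e) * (mu i * y i) + e ^+ 2 * mu i by ring.
under eq_bigr do rewrite expand.
by rewrite big_split /= sumrB -!mulr_sumr mu1 -/e; ring.
Qed.

Section SquaredNorm.
Variables (R : realType) (d : nat).

Lemma sqnormZ (a : R) (v : 'rV[R]_d) : sqnorm (a *: v) = a ^+ 2 * sqnorm v.
Proof. by rewrite /sqnorm mulr_sumr; apply: eq_bigr => k _; rewrite mxE exprMn. Qed.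

Lemma mxtrace_trmx_mul (u : 'rV[R]_d) : \tr (u^T *m u) = sqnorm u.
Proof.
by rewrite /mxtrace /sqnorm; apply: eq_bigr => k _; rewrite !mxE big_ord1 !mxE expr2.
Qed.

Lemma sum_sqnorm_centered (I : finType) (mu : I -> R) (y : I -> 'rV[R]_d) :
  \sum_i mu i = 1 ->
  \sum_i mu i * sqnorm (y i - \sum_l mu l *: y l) =
  \sum_i mu i * sqnorm (y i) - sqnorm (\sum_l mu l *: y l).
Proof.
move=> mu1.
have mean_entry k : (\sum_l mu l *: y l) 0 k = \sum_l mu l * y l 0 k.
  by rewrite summxE; apply: eq_bigr => l _; rewrite mxE.
transitivity (\sum_k \sum_i mu i * (y i 0 k - \sum_l mu l * y l 0 k) ^+ 2).
  rewrite exchange_big; apply: eq_bigr => i _; rewrite /sqnorm mulr_sumr.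
  by apply: eq_bigr => k _; rewrite !mxE mean_entry.
under eq_bigr do rewrite sum_sq_centered //.
rewrite sumrB /sqnorm exchange_big; congr (_ - _).
  by apply: eq_bigr => i _; rewrite mulr_sumr.
by apply: eq_bigr => k _; rewrite mean_entry.
Qed.

End SquaredNorm.

Lemma tr_Cov (R : realType) (N d : nat) (P : {set 'I_N} -> R)
    (Y : {set 'I_N} * 'I_N -> 'rV[R]_d) :
  \sum_w joint P w = 1 ->
  \tr (Cov P Y) = \sum_w joint P w * sqnorm (Y w) - sqnorm (Evec P Y).
Proof.
move=> joint1; rewrite /Cov raddf_sum /=.
under eq_bigr do rewrite mxtraceZ mxtrace_trmx_mul.
exact: sum_sqnorm_centered.
Qed.

Section BucketSampling.
Variables (R : realType) (N : nat) (P : {set 'I_N} -> R).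

Lemma sum_joint_mul (F : {set 'I_N} * 'I_N -> R) :
  \sum_w joint P w * F w = \sum_S P S / #|S|%:R * \sum_(m in S) F (S, m).
Proof.
transitivity (\sum_S \sum_m joint P (S, m) * F (S, m)).
  by rewrite pair_bigA; apply: eq_bigr => -[S m].
apply: eq_bigr => S _; rewrite mulr_sumr [RHS]big_mkcond /=.
apply: eq_bigr => m _; rewrite /joint.
by case: (m \in S); rewrite /= ?(mul1r, mul0r, mulr0); reflexivity.
Qed.

Lemma sum_joint_eq1 :
  \sum_S P S = 1 -> P finset.set0 = 0 -> \sum_w joint P w = 1.
Proof.
move=> P1 P_set0; rewrite -P1.
under eq_bigr do rewrite -[joint P _]mulr1.
rewrite sum_joint_mul; apply: eq_bigr => S _.
rewrite sumr_const -[1 *+ _]mulr_natr mul1r.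
have [->|S_neq0] := eqVneq S finset.set0; first by rewrite P_set0 !mul0r.
by rewrite divfK // pnatr_eq0 -lt0n card_gt0.
Qed.

Lemma sum_joint_card_mul (h : {set 'I_N} -> 'I_N -> R) :
  \sum_w joint P w * ((w.2 \in w.1)%:R * #|w.1|%:R * h w.1 w.2) =
  \sum_(m < N) \sum_(S : {set 'I_N} | m \in S) P S * h S m.
Proof.
rewrite sum_joint_mul /= (exchange_big_dep xpredT) //=.
apply: eq_bigr => S _; rewrite -mulr_sumr.
have [->|S_neq0] := eqVneq S finset.set0; first by rewrite !big_set0 !mulr0.
under eq_bigr => m mS do rewrite mS mul1r.
by rewrite -mulr_sumr mulrA divfK // pnatr_eq0 -lt0n card_gt0.
Qed.

Lemma sum_pin2 (i : 'I_N) :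
  \sum_(S : {set 'I_N} | i \in S) P S * #|S|%:R = \sum_(j < N) pin2 P i j.
Proof.
under eq_bigr do rewrite -sum1_card natr_sum mulr_sumr.
rewrite (exchange_big_dep xpredT) //=; apply: eq_bigr => j _.
by rewrite /pin2; apply: eq_bigr => S _; rewrite mulr1.
Qed.

Variables (d : nat) (g : 'I_N -> 'rV[R]_d).

Lemma EstE (w : {set 'I_N} * 'I_N) :
  Est P g w = ((w.2 \in w.1)%:R * #|w.1|%:R) *: ((N%:R * pin P w.2)^-1 *: g w.2).
Proof.
rewrite /Est (bigD1 w.2) //= big1 ?addr0 => [|i /negbTE ->]; last first.
  by rewrite mulr0 !mul0r scale0r.
by rewrite eqxx mulr1 !scalerA invfM; congr (_ *: _); ring.
Qed.

Lemma sum_joint_sqnorm_Est :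
  \sum_w joint P w * sqnorm (Est P g w) =
  (N%:R ^+ 2)^-1 * \sum_(i < N)
    (sqnorm (g i) * (\sum_(j < N) pin2 P i j / pin P i)) / pin P i.
Proof.
transitivity (\sum_w joint P w * ((w.2 \in w.1)%:R * #|w.1|%:R *
    (#|w.1|%:R * sqnorm ((N%:R * pin P w.2)^-1 *: g w.2)))).
  apply: eq_bigr => w _; rewrite EstE sqnormZ; congr (_ * _).
  by case: (_ \in _) => /=; ring.
rewrite (sum_joint_card_mul
  (fun S m => #|S|%:R * sqnorm ((N%:R * pin P m)^-1 *: g m))).
under eq_bigr do under eq_bigr do rewrite mulrA.
under eq_bigr do rewrite -mulr_suml sum_pin2.
rewrite mulr_sumr; apply: eq_bigr => i _.
by rewrite sqnormZ -mulr_suml invfM exprMn -exprVn; ring.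
Qed.

Hypothesis pin_neq0 : forall i, pin P i != 0.

Lemma Evec_Est : Evec P (Est P g) = N%:R^-1 *: \sum_(i < N) g i.
Proof.
apply/rowP => k; rewrite /Evec summxE.
transitivity (\sum_w joint P w *
    ((w.2 \in w.1)%:R * #|w.1|%:R * ((N%:R * pin P w.2)^-1 * g w.2 0 k))).
  by apply: eq_bigr => w _; rewrite EstE !mxE.
rewrite (sum_joint_card_mul (fun _ m => (N%:R * pin P m)^-1 * g m 0 k)).
under eq_bigr do rewrite -mulr_suml.
rewrite !mxE summxE mulr_sumr; apply: eq_bigr => m _.
by rewrite invfM -mulrA mulrCA (mulVKf (pin_neq0 m)).
Qed.

End BucketSampling.

Theorem theorem2 (R : realType) (N d : nat) (X : Type) (x : 'I_N -> X)
  (f : X -> 'rV[R]_d -> R) (th : 'rV[R]_d)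
  (P : {set 'I_N} -> R)
  (hdiff : forall i, differentiable (f (x i)) th)
  (hP0 : forall S, 0 <= P S)
  (hP1 : \sum_(S : {set 'I_N}) P S = 1)
  (hnonempty : P finset.set0 = 0)
  (hp : forall i, 0 < pin P i) :
  let g := fun i => grad (f (x i)) th in
  \tr (Cov P (Est P g)) =
    (N%:R ^+ 2)^-1 * \sum_(i < N)
        (sqnorm (g i) * (\sum_(j < N) pin2 P i j / pin P i)) / pin P i
    - (N%:R ^+ 2)^-1 * sqnorm (\sum_(i < N) g i).
Proof.
move=> g; have pin_neq0 i : pin P i != 0 by rewrite gt_eqF.
rewrite tr_Cov; last exact: sum_joint_eq1.
by rewrite sum_joint_sqnorm_Est (Evec_Est g pin_neq0) sqnormZ exprVn.
Qed.
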